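(* The entropy of a runtime trace of a program compiled according to the principle that every machine code instruction that writes introduces maximal entropy is $32(n+m)$ bits, where $m$ is the number of input words and $n$ is the number of distinct arithmetic instructions that write in the trace, counted once only per set if they belong to a set of trailer instructions for the same location, and once each otherwise.
   Context: Setting (encrypted computing with chaotic compilation). A processor computes on encrypted 32-bit words. The compiler is stochastic: each compilation of the same source code produces machine code of identical structure and identical runtime trace structure, differing only in encrypted constants embedded in instructions. At each program point the compiler maintains an obfuscation scheme: for every register and memory location $l$, an offset $\Delta l\in\mathbb{Z}/2^{32}$ such that the plaintext stored in $l$ at runtime equals the nominal (programmer-intended) value plus $\Delta l$ (mod $2^{32}$). Every arithmetic instruction has an embedded encrypted constant that can be chosen to set the offset of the location it writes to any desired value. The trace $T$ is the runtime sequence of writes to registers and memory locations (viewed at the level of plaintext values beneath the encryption); it is a random variable over recompilations, and its entropy is $\mathrm{H}(T)=\mathbb{E}[-\log_2 f_T]$ where $f_T$ is its probability distribution. An input is a read in the trace of a location not previously written in the trace; its offset is specified by the scheme. The principle ''every instruction that writes introduces maximal entropy'' means each arithmetic instruction that writes chooses the new offset of its target location uniformly at random in $\mathbb{Z}/2^{32}$, independently of all other choices (input offsets likewise uniform and independent), except as forced by correctness: copy instructions preserve data exactly, and where two control paths join (ends of loops, after conditionals, subroutine returns, goto targets) the offset of each location must coincide on all joining paths. An instruction that adjusts the offset of a location $l$ to the final value common with a joining control path (the last write to $l$ before the join on its path) is a trailer instruction; trailer instructions for the same location at a join form a set sharing one common offset. Executing the same instruction again (or another instruction with an already-determined offset)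 adds no new choice. *)

From HB Require Import structures.
From mathcomp Require Import all_boot all_order all_algebra.
From mathcomp Require Import reals exp.
From Stdlib Require List.
Set Implicit Arguments. Unset Strict Implicit. Unset Printing Implicit Defensive.
Import Order.TTheory GRing.Theory Num.Theory.
Local Open Scope ring_scope.

(* Plaintext 32-bit words: Z / 2^32 (2^32 > 1, so 'Z_ is the genuine ring). *)
Definition word_bits : nat := 32.
Definition word := 'Z_(2 ^ word_bits).

(* Every event carries the NOMINAL (programmer-intended) value it
   reads/writes; the plaintext observed is nominal + offset.
   - [Read l v]    : read of location l (operand fetch).
   - [Arith i l v] : arithmetic instruction i writes location l.
   - [Copy d s v]  : copy instruction: reads s, writes d, preserving data. *)
Inductive event (L I : Type) :=
| Read of L & word
| Arith of I & L & word
| Copy of L & L & word.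
Arguments Read {L I}.
Arguments Arith {L I}.
Arguments Copy {L I}.

(* Choice index of an arithmetic instruction: trailer instructions of the
   same trailer set share one choice (inr s); every other instruction has
   its own choice (inl i). *)
Definition choice_of (I S : Type) (trailer : I -> option S) (i : I) : I + S :=
  match trailer i with Some s => inr s | None => inl i end.

Definition upd (L : eqType) (st : L -> word) (l : L) (o : word) : L -> word :=
  fun x => if x == l then o else st x.

(* Plaintext values of the trace, given the offset state [st] (initially the
   input offsets) and the offsets chosen by the arithmetic instructions [cg]. *)
Fixpoint run (L : eqType) (I S : Type) (trailer : I -> option S)
    (cg : I + S -> word) (st : L -> word) (tr : seq (event L I)) : seq word :=
  match tr with
  | [::] => [::]
  | Read l v :: tr' => (v + st l) :: run trailer cg st tr'
  | Arith i l v :: tr' =>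
      let o := cg (choice_of trailer i) in (v + o) :: run trailer cg (upd st l o) tr'
  | Copy d s v :: tr' =>
      let o := st s in (v + o) :: run trailer cg (upd st d o) tr'
  end.

(* A compilation = the random choices: one uniform offset per input location
   and one uniform offset per (arithmetic instruction | trailer set). *)
Definition Omega (L I S : finType) : finType :=
  ({ffun L -> word} * {ffun (I + S)%type -> word})%type.

Definition trace (L I S : finType) (trailer : I -> option S)
    (tr : seq (event L I)) (w : Omega L I S) : seq word :=
  run trailer w.2 w.1 tr.

Definition log2 (R : realType) (x : R) : R := ln x / ln 2.

Definition entropy (R : realType) (Om : finType) (X : eqType) (T : Om -> X) : R :=
  \sum_(w : Om)
     (- log2 (#|[pred w' : Om | T w' == T w]|%:R / #|Om|%:R)) / #|Om|%:R.

Fixpoint inputs_aux (L : eqType) (I : Type) (written : seq L)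
    (tr : seq (event L I)) : seq L :=
  match tr with
  | [::] => [::]
  | Read l _ :: tr' =>
      (if l \in written then [::] else [:: l]) ++ inputs_aux written tr'
  | Arith _ l _ :: tr' => inputs_aux (l :: written) tr'
  | Copy d s _ :: tr' =>
      (if s \in written then [::] else [:: s]) ++ inputs_aux (d :: written) tr'
  end.

Definition num_inputs (L : eqType) (I : Type) (tr : seq (event L I)) : nat :=
  size (undup (inputs_aux [::] tr)).

Fixpoint arith_instrs (L I : Type) (tr : seq (event L I)) : seq I :=
  match tr with
  | [::] => [::]
  | Arith i _ _ :: tr' => i :: arith_instrs tr'
  | _ :: tr' => arith_instrs tr'
  end.

Definition num_writes (L : Type) (I S : eqType) (trailer : I -> option S)
    (tr : seq (event L I)) : nat :=
  size (undup [seq choice_of trailer i | i <- arith_instrs tr]).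

Definition trailers_same_loc (L I S : Type) (trailer : I -> option S)
    (tloc : S -> L) (tr : seq (event L I)) : Prop :=
  forall i l v, List.In (Arith i l v) tr ->
    forall s, trailer i = Some s -> l = tloc s.

From HB Require Import structures.
From mathcomp Require Import all_boot all_order all_algebra.
From mathcomp Require Import reals exp.
Set Implicit Arguments. Unset Strict Implicit. Unset Printing Implicit Defensive.
Import Order.TTheory GRing.Theory Num.Theory.

(* Every plaintext value of the trace is a nominal value shifted by one offset:
   either the offset of an input or the one chosen by an arithmetic
   instruction (or trailer set), copies only moving offsets around.  Two
   compilations therefore give the same trace exactly when they agree on the
   m inputs and on the n choices met in the trace, so every fibre of the
   trace map has the same size |Omega| / 2^(32(n+m)) and the trace is
   uniformly distributed on 2^(32(n+m)) values. *)

Lemma cons_addrI (V : zmodType) (v a b : V) (s t : seq V) :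
  (v + a)%R :: s = (v + b)%R :: t -> a = b /\ s = t.
Proof. by case=> /addrI. Qed.

Section TraceFibres.
Variables (L I S : eqType) (trailer : I -> option S).
Implicit Types (tr : seq (event L I)) (W : seq L) (st : L -> word) (cg : I + S -> word).

Definition choices_used tr : seq (I + S) :=
  [seq choice_of trailer i | i <- arith_instrs tr].

Lemma inputs_aux_notin tr W x : x \in inputs_aux W tr -> x \notin W.
Proof.
elim: tr W => [|[l v|i l v|d s v] tr IH] W //=; rewrite ?mem_cat.
- by case/orP=> [|/IH //]; case: ifPn => // lW; rewrite inE => /eqP ->.
- by move/IH; rewrite inE negb_or => /andP[].
- case/orP=> [|/IH]; first by case: ifPn => // sW; rewrite inE => /eqP ->.
  by rewrite inE negb_or => /andP[].
Qed.

Lemma agree_upd W st st' l o :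
  {in W, st =1 st'} -> {in l :: W, upd st l o =1 upd st' l o}.
Proof. by move=> eqW x; rewrite inE /upd; case: eqP => //= _ /eqW. Qed.

Lemma agree_inputs_upd tr W st st' l o o' :
  {in inputs_aux (l :: W) tr, upd st l o =1 upd st' l o'} <->
  {in inputs_aux (l :: W) tr, st =1 st'}.
Proof.
have upd_input f o'' x : x \in inputs_aux (l :: W) tr -> upd f l o'' x = f x.
  by move/inputs_aux_notin; rewrite inE negb_or /upd => /andP[/negbTE ->].
by split=> eqst x xin; move: (eqst x xin); rewrite !upd_input.
Qed.

Lemma agree_fetch_inputs W st st' l (X : seq L) : {in W, st =1 st'} ->
  {in (if l \in W then [::] else [:: l]) ++ X, st =1 st'} <->
  st l = st' l /\ {in X, st =1 st'}.
Proof.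
move=> eqW; split=> [eqst | [eql eqX] x].
  split; last by move=> x xX; apply: eqst; rewrite mem_cat xX orbT.
  have [/eqW //|lW] := boolP (l \in W).
  by apply: eqst; rewrite mem_cat (negbTE lW) mem_head.
by rewrite mem_cat => /orP[|/eqX //]; case: ifP => _ //; rewrite inE => /eqP ->.
Qed.

Lemma run_eqP tr W st st' cg cg' : {in W, st =1 st'} ->
  run trailer cg st tr = run trailer cg' st' tr <->
  {in inputs_aux W tr, st =1 st'} /\ {in choices_used tr, cg =1 cg'}.
Proof.
rewrite /choices_used.
elim: tr W st st' => [|[l v|i l v|d s v] tr IH] W st st' eqW /=.
- by split=> // _; split=> x; rewrite in_nil.
- rewrite (agree_fetch_inputs _ _ eqW); split=> [/cons_addrI[eql]|[[eql eqst] eqX]].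
    by move/(IH _ _ _ eqW) => [].
  by rewrite eql; congr cons; apply/(IH _ _ _ eqW).
- split=> [/cons_addrI[eqc]|[eqst /forall_cons[eqc eqX]]]; rewrite eqc.
    move/(IH _ _ _ (agree_upd _ eqW)) => [/agree_inputs_upd eqst eqX].
    by split=> //; apply/forall_cons.
  by congr cons; apply/(IH _ _ _ (agree_upd _ eqW)); split=> //; apply/agree_inputs_upd.
- rewrite (agree_fetch_inputs _ _ eqW); split=> [/cons_addrI[eqs]|[[eqs eqst] eqX]]; rewrite eqs.
    by move/(IH _ _ _ (agree_upd _ eqW)) => [/agree_inputs_upd].
  by congr cons; apply/(IH _ _ _ (agree_upd _ eqW)); split=> //; apply/agree_inputs_upd.
Qed.

End TraceFibres.

Lemma card_undup (T : finType) (s : seq T) : size (undup s) = #|s|.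
Proof. by rewrite -(card_uniqP (undup_uniq s)); apply: eq_card => x; rewrite mem_undup. Qed.

Lemma card_ffun_agree (T V : finType) (s : seq T) (g : T -> V) :
  #|[pred f : {ffun T -> V} | all (fun x => f x == g x) s]| * #|V| ^ #|s| = #|V| ^ #|T|.
Proof.
pose F x : pred V := if x \in s then pred1 (g x) else predT.
have -> : #|[pred f : {ffun T -> V} | all (fun x => f x == g x) s]| = #|family F|.
  apply: eq_card => f; rewrite !inE; apply/allP/familyP => agree x; rewrite /F.
    by case: ifP => xs //; rewrite inE agree.
  by move=> xs; move: (agree x); rewrite /F xs.
rewrite card_family foldrE big_image /=.
have -> : \prod_(x in T) #|F x| = #|V| ^ #|[predC s]|.
  rewrite -prod_nat_const [RHS]big_mkcond /=; apply: eq_bigr => x _.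
  by rewrite /F !inE; case: (x \in s); rewrite ?card1.
by rewrite -expnD addnC cardC.
Qed.

Lemma card_word : #|word| = 2 ^ word_bits.
Proof. by rewrite card_ord Zp_cast // -{1}(expn0 2) ltn_exp2l. Qed.

Lemma card_ffun_word_agree (T : finType) (s : seq T) (g : T -> word) :
  #|[pred f : {ffun T -> word} | all (fun x => f x == g x) s]| * 2 ^ (32 * #|s|)
  = 2 ^ (32 * #|T|).
Proof. by have := card_ffun_agree s g; rewrite card_word -!expnM. Qed.

Section TraceDistribution.
Variables (L I S : finType) (trailer : I -> option S) (tr : seq (event L I)).

Lemma trace_fibreE (w : Omega L I S) :
  [pred w' | trace trailer tr w' == trace trailer tr w] =i
  [predX [pred f : {ffun L -> word} | all (fun x => f x == w.1 x) (inputs_aux [::] tr)]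
       & [pred f : {ffun I + S -> word} | all (fun c => f c == w.2 c) (choices_used trailer tr)]].
Proof.
move=> [st cg]; rewrite !inE /trace /=.
have agree_nil : {in [::], st =1 w.1} by [].
apply/eqP/andP => [/(run_eqP _ _ _ _ agree_nil) [eqst eqcg]|[/allP eqst /allP eqcg]].
  by split; apply/allP => x /[dup] xin; [move/eqst|move/eqcg] => ->.
by apply/(run_eqP _ _ _ _ agree_nil); split=> x /[dup] xin; [move/eqst|move/eqcg] => /eqP.
Qed.

Lemma card_trace_fibre (w : Omega L I S) :
  #|[pred w' | trace trailer tr w' == trace trailer tr w]|
    * 2 ^ (32 * (num_writes trailer tr + num_inputs tr)) = #|Omega L I S|.
Proof.
rewrite (eq_card (trace_fibreE w)) cardX /num_writes /num_inputs !card_undup.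
rewrite addnC mulnDr expnD mulnACA !card_ffun_word_agree.
by rewrite card_prod !card_ffun card_word -!expnM.
Qed.

End TraceDistribution.

Section UniformEntropy.
Local Open Scope ring_scope.
Variables (R : realType) (Om : finType) (X : eqType) (T : Om -> X) (k : nat).
Hypotheses (Om_gt0 : (0 < #|Om|)%N)
  (card_fibre : forall w, (#|[pred w' | T w' == T w]| * 2 ^ k)%N = #|Om|).

Lemma entropy_uniform_fibres : entropy R T = k%:R.
Proof.
have Om_neq0 : #|Om|%:R != 0 :> R by rewrite pnatr_eq0 -lt0n.
have ln2_neq0 : ln 2 != 0 :> R by rewrite gt_eqF // ln_gt0 // ltr1n.
have surprisal w : - log2 (#|[pred w' | T w' == T w]|%:R / #|Om|%:R) = k%:R :> R.
  have fibre_neq0 : #|[pred w' | T w' == T w]|%:R != 0 :> R.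
    by move: Om_gt0; rewrite -(card_fibre w) muln_gt0 pnatr_eq0 -lt0n => /andP[].
  rewrite -(card_fibre w) natrM invfM mulrA divff // !mul1r /log2.
  rewrite lnV ?posrE ?ltr0n ?expn_gt0 // natrX lnXn //.
  by rewrite mulNr opprK mulrnAl divff.
rewrite /entropy (eq_bigr (fun=> k%:R / #|Om|%:R)) => [|w _]; last by rewrite surprisal.
by rewrite (eq_bigl (mem Om)) // sumr_const -[_ *+ #|_|]mulr_natr divfK.
Qed.

End UniformEntropy.

Theorem lemma1 (R : realType) (L I S : finType) (trailer : I -> option S)
    (tloc : S -> L) (tr : seq (event L I)) :
  trailers_same_loc trailer tloc tr ->
  entropy R (trace trailer tr) =
    ((32 * (num_writes trailer tr + num_inputs tr))%:R)%R.
Proof.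
(* Trailer instructions of one set already share a single choice through
   [choice_of]. *)
move=> _; apply: entropy_uniform_fibres; last exact: card_trace_fibre.
by rewrite card_prod !card_ffun muln_gt0 !expn_gt0 card_word expn_gt0.
Qed.
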